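(* Let $A\in\mathbb{R}^{n\times n}$, $B\in\mathbb{R}^{n\times m}$, let $N\geq n+m$, and for $i=1,\dots,N$ let $x_{i,1},x_{i,2}\in\mathbb{R}^{n}$, $u_{i,1}\in\mathbb{R}^{m}$ satisfy $x_{i,2}=Ax_{i,1}+Bu_{i,1}$. Put $X_{N,1}:=(x_{1,1},\dots,x_{N,1})^{\top}$, $X_{N,2}:=(x_{1,2},\dots,x_{N,2})^{\top}$ (both in $\mathbb{R}^{N\times n}$), $U_{N,1}:=(u_{1,1},\dots,u_{N,1})^{\top}\in\mathbb{R}^{N\times m}$, and $Z_{N,2}:=X_{N,1}A$. Suppose that $\operatorname{rank}\begin{pmatrix}X_{N,1} & U_{N,1}\end{pmatrix}=n+m$, $\operatorname{rank}X_{N,1}=n$, and $\operatorname{rank}U_{N,1}=m$. Then: (i) the equation $X_{N,1}U_{B_{N,1}}^{\top}=X_{N,1}X_{N,2}^{\top}-Z_{N,2}X_{N,1}^{\top}$ in the unknown $U_{B_{N,1}}\in\mathbb{R}^{N\times n}$ has the unique solution $U_{B_{N,1}}=U_{N,1}B^{\top}$; (ii) for every $S\in\mathbb{R}^{n\times r}$, with $U_{B_{N,1}}=U_{N,1}B^{\top}$, the equation $U_{N,1}S_{B}=U_{B_{N,1}}S$ in the unknown $S_{B}\in\mathbb{R}^{m\times r}$ has the unique solution $S_{B}=B^{\top}S$. *)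

From HB Require Import structures.
From mathcomp Require Export all_boot all_order all_algebra.
From mathcomp Require Export reals.
Set Implicit Arguments. Unset Strict Implicit. Unset Printing Implicit Defensive.
Export Order.TTheory GRing.Theory Num.Theory.
Local Open Scope ring_scope.

(* stack v = (v_1, ..., v_N)^T : the N x k matrix whose i-th row is v_i^T *)
Definition stack (R : Type) (N k : nat) (v : 'I_N -> 'cV[R]_k) : 'M[R]_(N, k) :=
  \matrix_(i < N, j < k) v i j 0.

Set Implicit Arguments. Unset Strict Implicit. Unset Printing Implicit Defensive.
Local Open Scope ring_scope.

(** Stacking the dynamics [x_{i,2} = A x_{i,1} + B u_{i,1}] row by row gives
    [X_{N,2} = X_{N,1} A^T + U_{N,1} B^T], so the right-hand side of (i) equals
    [X_{N,1} (U_{N,1} B^T)^T].  Both equations then have the form [M P = M Q]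
    with [M = X_{N,1}] resp. [M = U_{N,1}] of full column rank, and left
    multiplication by such a matrix is injective. *)

Lemma mulmx_full_col_rank_inj (F : fieldType) (N k p : nat) (M : 'M[F]_(N, k)) :
  \rank M = k -> injective (mulmx M : 'M_(k, p) -> 'M_(N, p)).
Proof.
move=> rankM P Q eqMPQ.
have freeMT : row_free M^T by rewrite /row_free mxrank_tr rankM.
apply: trmx_inj; apply: (row_free_inj freeMT).
by rewrite -!trmx_mul eqMPQ.
Qed.

Lemma eq_stack (R : Type) (N k : nat) (v w : 'I_N -> 'cV[R]_k) :
  v =1 w -> stack v = stack w.
Proof. by move=> eq_vw; apply/matrixP=> i j; rewrite !mxE eq_vw. Qed.

Lemma stackD (R : nmodType) (N k : nat) (v w : 'I_N -> 'cV[R]_k) :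
  stack (fun i => v i + w i) = stack v + stack w.
Proof. by apply/matrixP=> i j; rewrite !mxE. Qed.

Lemma stack_mulmx (R : comPzSemiRingType) (N k l : nat)
    (A : 'M[R]_(l, k)) (v : 'I_N -> 'cV[R]_k) :
  stack (fun i => A *m v i) = stack v *m A^T.
Proof.
apply/matrixP=> i j; rewrite !mxE; apply: eq_bigr => h _.
by rewrite !mxE mulrC.
Qed.

Theorem lemma3 (R : realType) (n m N : nat)
  (A : 'M[R]_n) (B : 'M[R]_(n, m))
  (x1 x2 : 'I_N -> 'cV[R]_n) (u1 : 'I_N -> 'cV[R]_m)
  (hN : (n + m <= N)%N)
  (hdyn : forall i : 'I_N, x2 i = A *m x1 i + B *m u1 i)
  (hrankXU : \rank (row_mx (stack x1) (stack u1)) = (n + m)%N)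
  (hrankX : \rank (stack x1) = n)
  (hrankU : \rank (stack u1) = m) :
  let X1 := stack x1 in
  let X2 := stack x2 in
  let U1 := stack u1 in
  let Z2 := X1 *m A in
  (forall UB : 'M[R]_(N, n),
      X1 *m UB^T = X1 *m X2^T - Z2 *m X1^T <-> UB = U1 *m B^T) /\
  (forall (r : nat) (S : 'M[R]_(n, r)) (SB : 'M[R]_(m, r)),
      U1 *m SB = (U1 *m B^T) *m S <-> SB = B^T *m S).
Proof.
move=> X1 X2 U1 Z2.
have X2E : X2 = X1 *m A^T + U1 *m B^T.
  by rewrite /X2 (eq_stack hdyn) stackD !stack_mulmx.
have rhsE : X1 *m X2^T - Z2 *m X1^T = X1 *m (U1 *m B^T)^T.
  by rewrite X2E linearD /= mulmxDr !trmx_mul trmxK !mulmxA addrAC subrr add0r.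
split=> [UB | r S SB].
  by rewrite rhsE; split=> [/(mulmx_full_col_rank_inj hrankX)/trmx_inj | ->].
by rewrite -mulmxA; split=> [/(mulmx_full_col_rank_inj hrankU) | ->].
Qed.
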